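(* Let $\Delta>1$ and $D\le n/2$. Suppose $M\in\mathbb{F}_2^{m\times n}$ is a matrix capable of $\Delta$-approximating $d=\|\mathbf{x}\|_0$ (in the group testing model) for all $\mathbf{x}\in\mathbb{F}_2^n$ with $d\le D$. Then necessarily $$m\ge\left(\frac{D}{\Delta^2}-1\right)\log\frac{n}{D-\Delta^2}-\left(\frac{D}{\Delta^2}-1\right)\log e=\Omega\!\left(\frac{D}{\Delta^2}\log\frac{n}{D}\right).$$
   Context: $\log$ denotes $\log_2$. $\|\mathbf{x}\|_0$ is the number of nonzero entries of $\mathbf{x}$. Group testing model: for $M\in\mathbb{F}_2^{m\times n}$ and $\mathbf{x}\in\mathbb{F}_2^n$, $M\odot\mathbf{x}\in\mathbb{F}_2^m$ is defined by $(M\odot\mathbf{x})_i=\bigvee_{j:M_{ij}=1}\mathbf{x}_j$ (logical OR). $M$ is capable of $\Delta$-approximating $d$ when $d\le D$ if there is a deterministic decoder which, given only $M\odot\mathbf{x}$, outputs $\hat d$ with $\frac1\Delta\le\frac{\hat d}{d}\le\Delta$ for every $\mathbf{x}$ with $d=\|\mathbf{x}\|_0\le D$. *)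

From HB Require Import structures.
From mathcomp Require Import all_boot all_order all_algebra.
From mathcomp Require Import reals sequences exp.
Set Implicit Arguments. Unset Strict Implicit. Unset Printing Implicit Defensive.
Import Order.TTheory GRing.Theory Num.Theory.
Local Open Scope ring_scope.

(* F_2 entries are represented by bool (true = 1). *)

Definition gt_mul (m n : nat) (M : 'M[bool]_(m, n)) (x : {ffun 'I_n -> bool})
  : {ffun 'I_m -> bool} := [ffun i => [exists j, M i j && x j]].

Definition wt (n : nat) (x : {ffun 'I_n -> bool}) : nat := #|[set j | x j]|.

(* M is capable of Delta-approximating d when d <= D: a deterministic decoder
   seeing only M ⊙ x outputs dhat with 1/Delta <= dhat/d <= Delta
   (for every x with 1 <= d <= D; the ratio is undefined at d = 0). *)
Definition approximates (R : realType) (m n : nat) (M : 'M[bool]_(m, n))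
  (Delta : R) (D : nat) : Prop :=
  exists dec : {ffun 'I_m -> bool} -> R,
    forall x : {ffun 'I_n -> bool}, (0 < wt x <= D)%N ->
      1 / Delta <= dec (gt_mul M x) / (wt x)%:R <= Delta.

Definition log2 (R : realType) (x : R) : R := ln x / ln 2.

From HB Require Import structures.
From mathcomp Require Import all_boot all_order all_algebra.
From mathcomp Require Import reals sequences exp.
From mathcomp Require Import zify ring lra.

Set Implicit Arguments.
Unset Strict Implicit.
Unset Printing Implicit Defensive.
Import Order.TTheory GRing.Theory Num.Theory.
Local Open Scope ring_scope.

(* Let T = Delta^2 and let a be the largest integer with a T < D.  For a set S
   of a defectives, let P be the set of items lying in no negative test of the
   outcome of S.  Every Z with S <= Z <= P has the same outcome as S, so the
   decoder's single estimate is Delta-close to both |S| and |Z|; taking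
   |Z| = min(|P|, D) forces |P| <= T a.  The a-sets with a given outcome are
   a-subsets of its P, hence C(n, a) <= 2^m C(T a, a), and therefore
   a log(n / (T a)) <= m.  Finally b = D / T - 1 lies in (0, a] and
   n >= 2 T a, and then b log(n / (T b)) - b log e <= a log(n / (T a))
   follows from ln t <= t / 2 and ln 2 >= 1 / 2. *)

Lemma exists_subset_between (T : finType) (S C : {set T}) (k : nat) :
  S \subset C -> (#|S| <= k <= #|C|)%N ->
  exists Z : {set T}, [/\ S \subset Z, Z \subset C & #|Z| = k].
Proof.
move=> sSC /andP[leSk lekC].
have : (0 < #|[set A : {set T} | A \subset C :\: S & #|A| == k - #|S|]|)%N.
  by rewrite cards_draws bin_gt0 cardsDS //; lia.
case/card_gt0P => A; rewrite inE subsetD => /andP[/andP[sAC dAS] /eqP cardA].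
exists (S :|: A); split; first exact: subsetUl.
  by rewrite subUset sSC.
rewrite cardsU setIC (disjoint_setI0 dAS) cards0 cardA; lia.
Qed.

Lemma ffact_expn_le (n K a : nat) : (K <= n)%N ->
  (n ^ a * K ^_ a <= n ^_ a * K ^ a)%N.
Proof.
move=> leKn; elim: a => [|a IHa]; first by rewrite !expn0 !ffactn0.
rewrite !ffactnSr !expnSr.
have le_last_factor : (n * (K - a) <= (n - a) * K)%N by case: (leqP a K) => ?; nia.
by rewrite mulnACA [X in (_ <= X)%N]mulnACA leq_mul.
Qed.

Lemma expn_bin_le (n K a : nat) : (K <= n)%N ->
  (n ^ a * 'C(K, a) <= 'C(n, a) * K ^ a)%N.
Proof.
move=> leKn; rewrite -(leq_pmul2r (fact_gt0 a)).
by rewrite -mulnA bin_ffact mulnAC bin_ffact ffact_expn_le.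
Qed.

Section GroupTestingOutcomes.

Variables (m n : nat) (M : 'M[bool]_(m, n)).

Definition indicator (S : {set 'I_n}) : {ffun 'I_n -> bool} := [ffun j => j \in S].

Definition outcome (S : {set 'I_n}) : {ffun 'I_m -> bool} := gt_mul M (indicator S).

Definition possible_defectives (y : {ffun 'I_m -> bool}) : {set 'I_n} :=
  [set j | [forall i, M i j ==> y i]].

Lemma wt_indicator (S : {set 'I_n}) : wt (indicator S) = #|S|.
Proof. by apply: eq_card => j; rewrite !inE ffunE. Qed.

Lemma outcomeS (S Z : {set 'I_n}) :
  S \subset Z -> forall i, outcome S i -> outcome Z i.
Proof.
move=> sSZ i; rewrite !ffunE => /existsP[j /andP[Mij]]; rewrite ffunE => jS.
by apply/existsP; exists j; rewrite Mij ffunE (subsetP sSZ).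
Qed.

Lemma sub_possible_defectives (S : {set 'I_n}) :
  S \subset possible_defectives (outcome S).
Proof.
apply/subsetP => j jS; rewrite inE; apply/forallP => i; apply/implyP => Mij.
by rewrite ffunE; apply/existsP; exists j; rewrite Mij ffunE.
Qed.

Lemma outcome_possible_defectives (y : {ffun 'I_m -> bool}) (i : 'I_m) :
  outcome (possible_defectives y) i -> y i.
Proof.
rewrite ffunE => /existsP[j /andP[Mij]]; rewrite ffunE inE.
by move=> /forallP/(_ i); rewrite Mij.
Qed.

Lemma outcome_between (S Z : {set 'I_n}) :
  S \subset Z -> Z \subset possible_defectives (outcome S) -> outcome Z = outcome S.
Proof.
move=> sSZ sZP; apply/ffunP => i; apply/idP/idP; last exact: outcomeS.
by move=> /(outcomeS sZP); apply: outcome_possible_defectives.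
Qed.

Lemma bin_le_outcomes (a K : nat) :
  (forall S : {set 'I_n}, #|S| = a -> #|possible_defectives (outcome S)| <= K)%N ->
  ('C(n, a) <= 2 ^ m * 'C(K, a))%N.
Proof.
move=> leK.
rewrite -[n]card_ord -card_draws -sum1_card (partition_big outcome predT) //=.
have -> : (2 ^ m = #|{ffun 'I_m -> bool}|)%N by rewrite card_ffun card_bool card_ord.
rewrite -sum_nat_const leq_sum // => y _.
have [S /andP[] | noS] := pickP [pred S : {set 'I_n} | (#|S| == a) && (outcome S == y)].
  move=> /eqP cardS /eqP <-; apply: leq_trans (leq_bin2l _ (leK S cardS)).
  rewrite -cards_draws sum1_card; apply: subset_leq_card.
  apply/subsetP => Z; rewrite unfold_in /= !inE => /andP[cardZ /eqP <-].
  by rewrite cardZ sub_possible_defectives.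
by rewrite big_pred0 // => S; rewrite inE -[_ && _]/([pred S | _] S) noS.
Qed.

Lemma expn_le_outcomes (a : nat) : (a <= n)%N ->
  exists2 S : {set 'I_n}, #|S| = a &
    (n ^ a <= 2 ^ m * #|possible_defectives (outcome S)| ^ a)%N.
Proof.
move=> lean.
have [S0 cardS0] : exists S0 : {set 'I_n}, #|S0| == a.
  have : (0 < #|[set S : {set 'I_n} | #|S| == a]|)%N.
    by rewrite card_draws card_ord bin_gt0.
  by case/card_gt0P => S0; rewrite inE; exists S0.
have [S /eqP cardS maxS] :=
  @arg_maxnP _ S0 (fun S => #|S| == a)
    (fun S => #|possible_defectives (outcome S)|) cardS0.
exists S => //.
set K := #|possible_defectives (outcome S)|.
have leaK : (a <= K)%N by rewrite -cardS subset_leq_card ?sub_possible_defectives.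
have leKn : (K <= n)%N by rewrite -[n]card_ord max_card.
rewrite -(@leq_pmul2r 'C(K, a)) ?bin_gt0 // mulnAC.
apply: leq_trans (expn_bin_le a leKn) _; rewrite leq_mul2r.
by rewrite bin_le_outcomes ?orbT // => Z /eqP cardZ; apply: maxS.
Qed.

End GroupTestingOutcomes.

Section Approximation.

Variables (R : realType) (m n : nat) (M : 'M[bool]_(m, n)) (Delta : R) (D : nat).
Hypotheses (Delta_ge1 : 1 <= Delta) (approx : approximates M Delta D).

Lemma approximates_same_outcome (x y : {ffun 'I_n -> bool}) :
  gt_mul M x = gt_mul M y -> (0 < wt x <= D)%N -> (0 < wt y <= D)%N ->
  (wt y)%:R <= Delta ^+ 2 * (wt x)%:R.
Proof.
move=> Mxy wx wy; have [dec dec_approx] := approx.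
have /andP[_ hx] := dec_approx x wx; have /andP[hy _] := dec_approx y wy.
have x_gt0 : 0 < (wt x)%:R :> R by rewrite ltr0n; case/andP: wx.
have y_gt0 : 0 < (wt y)%:R :> R by rewrite ltr0n; case/andP: wy.
have Delta_gt0 : 0 < Delta := lt_le_trans ltr01 Delta_ge1.
rewrite Mxy ler_pdivrMr // in hx.
rewrite ler_pdivlMr // mul1r ler_pdivrMl // in hy.
by apply: le_trans hy _; rewrite expr2 -mulrA ler_wpM2l // ltW.
Qed.

Lemma card_possible_defectives_le (S : {set 'I_n}) :
  (0 < #|S|)%N -> Delta ^+ 2 * #|S|%:R < D%:R ->
  #|possible_defectives M (outcome M S)|%:R <= Delta ^+ 2 * #|S|%:R.
Proof.
move=> S_gt0 ltSD; set P := possible_defectives _ _.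
have Delta2_ge1 : 1 <= Delta ^+ 2 by rewrite expr_ge1 // (le_trans ler01).
have leSD : (#|S| < D)%N.
  by rewrite -(ltr_nat R); apply: le_lt_trans ltSD; rewrite ler_peMl.
have leSk : (#|S| <= minn #|P| D <= #|P|)%N.
  by rewrite geq_minl leq_min (ltnW leSD) subset_leq_card ?sub_possible_defectives.
have [Z [sSZ sZP cardZ]] := exists_subset_between (sub_possible_defectives M S) leSk.
have wtS : (0 < wt (indicator S) <= D)%N by rewrite wt_indicator S_gt0 ltnW.
have wtZ : (0 < wt (indicator Z) <= D)%N.
  by rewrite wt_indicator cardZ geq_minr (leq_trans S_gt0) //; case/andP: leSk.
have := approximates_same_outcome (esym (outcome_between sSZ sZP)) wtS wtZ.
rewrite !wt_indicator cardZ => leZ.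
have /minn_idPl <- // : (#|P| <= D)%N.
by rewrite leqNgt; apply/negP => /ltnW/minn_idPr eqD; move: leZ; rewrite eqD; lra.
Qed.

Lemma approximates_expn_le (a : nat) : (0 < a <= n)%N ->
  Delta ^+ 2 * a%:R < D%:R -> n%:R ^+ a <= 2 ^+ m * (Delta ^+ 2 * a%:R) ^+ a.
Proof.
case/andP=> a_gt0 le_a_n lt_aD.
have [S cardS le_n_outcomes] := expn_le_outcomes M le_a_n.
have := card_possible_defectives_le (S := S).
rewrite cardS => /(_ a_gt0 lt_aD) le_cover.
set K := #|possible_defectives M (outcome M S)| in le_n_outcomes le_cover *.
apply: le_trans (_ : (2 ^ m * K ^ a)%N%:R <= _); first by rewrite -natrX ler_nat.
rewrite natrM !natrX ler_wpM2l ?exprn_ge0 // lerXn2r ?nnegrE ?ler0n //.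
exact: le_trans le_cover.
Qed.

End Approximation.

Section RealBounds.

Variable R : realType.

Lemma ln2_ge_half : 1 / 2 <= ln (2 : R).
Proof.
have := @le_ln1Dx R (- (1 / 2)) ltac:(lra).
by rewrite (_ : 1 + _ = 2^-1) ?lnV ?posrE //; [lra | field].
Qed.

Lemma ln2_le1 : ln (2 : R) <= 1.
Proof. by have := @le_ln1Dx R 1 ltac:(lra); rewrite (_ : 1 + 1 = 2). Qed.

Lemma ln_le_half (x : R) : 0 < x -> ln x <= x / 2.
Proof.
move=> x_gt0; have := @le_ln1Dx R (x / 2 - 1) ltac:(lra).
rewrite (_ : 1 + _ = x / 2) ?ln_div ?posrE //; last by ring.
by have := ln2_le1; lra.
Qed.

Lemma log2_le_of_expn (x y : R) (a k : nat) : 0 < x -> 0 < y ->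
  x ^+ a <= 2 ^+ k * y ^+ a -> a%:R * log2 (x / y) <= k%:R.
Proof.
move=> x_gt0 y_gt0.
have ln2_gt0 : 0 < ln (2 : R) by rewrite ln_gt0 // ltr1n.
rewrite -ler_ln ?posrE ?exprn_gt0 //; last by rewrite mulr_gt0 ?exprn_gt0.
rewrite lnM ?posrE ?exprn_gt0 // !lnXn // -[ln x *+ a]mulr_natl.
rewrite -[ln y *+ a]mulr_natl -[ln 2 *+ k]mulr_natl => le_ln.
by rewrite /log2 ln_div ?posrE // mulrA ler_pdivrMr //; lra.
Qed.

Lemma mul_log2_div_le (x a b : R) : 0 < b <= a -> 2 * a <= x ->
  b * log2 (x / b) - b * log2 (expR 1) <= a * log2 (x / a).
Proof.
move=> /andP[b_gt0 le_ba] le_2a_x.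
have a_gt0 : 0 < a by apply: lt_le_trans le_ba.
have x_gt0 : 0 < x by lra.
have ln2_gt0 : 0 < ln (2 : R) by rewrite ln_gt0 // ltr1n.
have ln_xa_ge_half : 1 / 2 <= ln (x / a).
  apply: le_trans (ln2_ge_half) _.
  by rewrite ler_ln ?posrE ?divr_gt0 // ler_pdivlMr // mulrC.
have ln_ab_le : b * ln (a / b) <= a / 2.
  have := ln_le_half (divr_gt0 a_gt0 b_gt0).
  rewrite -(ler_pM2l b_gt0) => /le_trans; apply.
  rewrite (_ : b * (a / b / 2) = a / 2) //.
  by field; rewrite gt_eqF.
have ln_xb : ln (x / b) = ln (x / a) + ln (a / b).
  by rewrite -lnM ?posrE ?divr_gt0 // mulrA divfK ?gt_eqF.
rewrite /log2 expRK !mulrA -mulrBl ler_wpM2r ?invr_ge0 ?ltW // ln_xb.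
have : 0 <= (a - b) * (ln (x / a) - 1 / 2) by rewrite mulr_ge0 ?subr_ge0.
lra.
Qed.

Lemma exists_nat_mul_bracket (T : R) (D : nat) :
  1 <= T -> (0 < D)%N -> exists a : nat, a%:R * T < D%:R <= a.+1%:R * T.
Proof.
move=> T_ge1 D_gt0.
have exP : exists a : nat, a%:R * T < D%:R by exists 0%N; rewrite mul0r ltr0n.
have ubP (a : nat) : a%:R * T < D%:R -> (a <= D)%N.
  move=> lt_aT_D; rewrite -(ler_nat R) ltW // (le_lt_trans _ lt_aT_D) //.
  by rewrite ler_peMr.
case: (ex_maxnP exP ubP) => a lt_aT_D max_a; exists a; rewrite lt_aT_D /=.
by rewrite leNgt; apply/negP => /max_a; rewrite ltnn.
Qed.

End RealBounds.

Theorem theorem2 (R : realType) (m n D : nat) (Delta : R) (M : 'M[bool]_(m, n)) :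
  1 < Delta -> (2 * D <= n)%N -> Delta ^+ 2 < D%:R ->
  approximates M Delta D ->
  (D%:R / Delta ^+ 2 - 1) * log2 (n%:R / (D%:R - Delta ^+ 2))
    - (D%:R / Delta ^+ 2 - 1) * log2 (expR 1) <= m%:R.
Proof.
move=> Delta_gt1 le_2D_n lt_T_D approx; set T := Delta ^+ 2 in lt_T_D *.
have T_ge1 : 1 <= T by rewrite expr_ge1 // ltW // (lt_trans ltr01).
have T_gt0 : 0 < T := lt_le_trans ltr01 T_ge1.
have D_gt0 : (0 < D)%N by rewrite -(ltr_nat R) (lt_trans T_gt0).
have [a /andP[lt_aT_D le_D_a1T]] := exists_nat_mul_bracket T_ge1 D_gt0.
have a_gt0 : (0 < a)%N.
  by rewrite lt0n; apply: contraTneq le_D_a1T => ->; rewrite mul1r -ltNge.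
have a_gt0R : 0 < a%:R :> R by rewrite ltr0n.
have le_2D_nR : 2 * D%:R <= n%:R :> R by rewrite -natrM ler_nat.
have le_a_n : (a <= n)%N by rewrite -(ler_nat R); nra.
rewrite (_ : n%:R / (D%:R - T) = n%:R / T / (D%:R / T - 1)); last first.
  by field; rewrite !gt_eqF //; lra.
apply: le_trans (@mul_log2_div_le _ _ a%:R _ _ _) _.
- rewrite subr_gt0 ltr_pdivlMr // mul1r lt_T_D /= lerBlDr ler_pdivrMr //.
  by rewrite -natr1 in le_D_a1T.
- by rewrite ler_pdivlMr //; lra.
rewrite -mulrA -invfM.
apply: (log2_le_of_expn _ (mulr_gt0 T_gt0 a_gt0R)).
  by rewrite ltr0n (leq_trans a_gt0).
apply: (approximates_expn_le (ltW Delta_gt1) approx); first by rewrite a_gt0.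
by rewrite mulrC.
Qed.
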